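(* Consider binary node classification with classes $\{0,1\}$, let $k\in\{0,1\}$, and let $c_0,c_1\in(0,1)$ be the class homophily parameters. Assume the classes are balanced ($P(\hat{Y}=0)=P(\hat{Y}=1)$), the graph is heterophilic ($c_k<1-c_{1-k}$), and $0<c_k<0.5$. If two nodes $n$ and $m$ have the same degree $d$ and $|\mathcal{N}_k(n)| > |\mathcal{N}_k(m)|$, then $$P\big(\hat{Y}_{n} = k \mid \{Y_j\}_{j\in\mathcal{N}(n)}\big) < P\big(\hat{Y}_{m} = k \mid \{Y_j\}_{j\in\mathcal{N}(m)}\big).$$
   Context: Model: each node $i$ has a (latent/soft) class $\hat{Y}_i\in\{0,1\}$, and each neighbor $j\in\mathcal{N}(i)$ has an observed label $Y_j\in\{0,1\}$. Given $\hat{Y}_i$, the neighbor labels are conditionally independent with $P(Y_j=k\mid \hat{Y}_i=k)=c_k$ and $P(Y_j=1-k\mid\hat{Y}_i=k)=1-c_k$ for $k\in\{0,1\}$ ($c_k$ is the class homophily of class $k$). The posterior is obtained by Bayes' rule: $P(\hat Y_i=k\mid\{Y_j=y_j\}_{j\in\mathcal N(i)})\propto P(\hat Y_i=k)\prod_{j\in\mathcal N(i)}P(Y_j=y_j\mid \hat Y_i=k)$, conditioning on the observed neighbor labels. Notation: $\mathcal{N}_k(i)=\{j\in\mathcal{N}(i): y_j=k\}$, $\mathcal{N}_{1-k}(i)=\{j\in\mathcal{N}(i): y_j=1-k\}$, and the degree of $i$ is $|\mathcal N(i)|=|\mathcal{N}_k(i)|+|\mathcal{N}_{1-k}(i)|$.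 *)

(* Classes are encoded as bool: false = class 0, true = class 1. *)
From mathcomp Require Import all_boot all_order all_algebra.
Set Implicit Arguments. Unset Strict Implicit. Unset Printing Implicit Defensive.
Import Order.TTheory GRing.Theory Num.Theory.
Local Open Scope ring_scope.

Section Model.
Variables (R : realFieldType) (V : finType).

(* P(Y_j = y | \hat Y_i = k) : equals c_k if y = k, and 1 - c_k otherwise. *)
Definition nbr_lik (c : bool -> R) (k y : bool) : R :=
  if y == k then c k else 1 - c k.

Definition joint (prior c : bool -> R) (nbr : V -> {set V}) (y : V -> bool)
    (i : V) (k : bool) : R :=
  prior k * \prod_(j in nbr i) nbr_lik c k (y j).

Definition posterior (prior c : bool -> R) (nbr : V -> {set V}) (y : V -> bool)
    (i : V) (k : bool) : R :=
  joint prior c nbr y i k / \sum_(k' : bool) joint prior c nbr y i k'.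

Definition nbr_k (nbr : V -> {set V}) (y : V -> bool) (i : V) (k : bool) : {set V} :=
  [set j in nbr i | y j == k].

End Model.

From mathcomp Require Import all_boot all_order all_algebra.
From mathcomp Require Import ring lra zify.
Import Order.TTheory GRing.Theory Num.Theory.
Local Open Scope ring_scope.

(* The posterior of class k at node i is J k / (J k + J (~~ k)), where J is the
   joint likelihood, so comparing two nodes amounts to comparing the cross
   products J_n(k) J_m(~~ k) and J_m(k) J_n(~~ k); the priors cancel there.
   Grouping the neighbours by label, J_i(k') depends only on the number s of
   neighbours labelled k, and each extra such neighbour multiplies the ratio
   J_i(k) / J_i(~~ k) by c_k c_{1-k} / ((1 - c_k)(1 - c_{1-k})), which is < 1
   exactly when c_k + c_{1-k} < 1. *)

Section Posterior.
Variables (R : realFieldType) (V : finType) (nbr : V -> {set V}) (y : V -> bool).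

Lemma nbr_kE (i : V) (k : bool) : nbr_k nbr y i k = nbr i :&: [set j | y j == k].
Proof. by apply/setP => j; rewrite !inE. Qed.

Lemma card_nbr_kN (i : V) (k : bool) :
  #|nbr_k nbr y i (~~ k)| = (#|nbr i| - #|nbr_k nbr y i k|)%N.
Proof.
have -> : nbr_k nbr y i (~~ k) = nbr i :\: [set j | y j == k].
  by apply/setP => j; rewrite !inE andbC; case: (y j); case: k.
by rewrite -(cardsID [set j | y j == k] (nbr i)) -nbr_kE addKn.
Qed.

Lemma prod_nbr_label (F : bool -> R) (i : V) (k : bool) :
  \prod_(j in nbr i) F (y j) =
  F k ^+ #|nbr_k nbr y i k| * F (~~ k) ^+ #|nbr_k nbr y i (~~ k)|.
Proof.
rewrite -!prodr_const (big_setID [set j | y j == k]) /= -nbr_kE.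
congr (_ * _); apply: eq_big => j.
- by [].
- by rewrite nbr_kE inE => /andP[_]; rewrite inE => /eqP ->.
- by rewrite !inE andbC; case: (y j); case: k.
- by rewrite !inE => /andP[]; case: (y j); case: k.
Qed.

Variables (prior c : bool -> R).
Hypothesis c_gt0_lt1 : forall b, 0 < c b < 1.

Lemma nbr_lik_gt0 (k l : bool) : 0 < nbr_lik c k l.
Proof. by have /andP[c0 c1] := c_gt0_lt1 k; rewrite /nbr_lik; case: eqP; lra. Qed.

Lemma joint_gt0 (i : V) (k : bool) : 0 < prior k -> 0 < joint prior c nbr y i k.
Proof. by move=> prior_gt0; rewrite mulr_gt0 // prodr_gt0 // => j _; apply: nbr_lik_gt0. Qed.

Lemma posteriorE (i : V) (k : bool) :
  posterior prior c nbr y i k =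
  joint prior c nbr y i k / (joint prior c nbr y i k + joint prior c nbr y i (~~ k)).
Proof. by rewrite /posterior big_bool; case: k; rewrite // addrC. Qed.

End Posterior.

Lemma ltr_share {R : realFieldType} (x y x' y' : R) :
  0 < x -> 0 < y -> 0 < x' -> 0 < y' -> x * y' < x' * y ->
  x / (x + y) < x' / (x' + y').
Proof.
move=> x_gt0 y_gt0 x'_gt0 y'_gt0 cross.
rewrite ltr_pdivrMr ?addr_gt0 // mulrAC ltr_pdivlMr ?addr_gt0 //.
nra.
Qed.

(* Both sides share the factor x^s z^(d-t) u^s w^(d-t); what remains is
   (x w)^(t-s) < (z u)^(t-s). *)
Lemma ltr_binomial_cross {R : realFieldType} (x z u w : R) (s t d : nat) :
  0 < x -> 0 < z -> 0 < u -> 0 < w -> x * w < z * u -> (s < t <= d)%N ->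
  x ^+ t * z ^+ (d - t) * (u ^+ s * w ^+ (d - s)) <
  x ^+ s * z ^+ (d - s) * (u ^+ t * w ^+ (d - t)).
Proof.
move=> x_gt0 z_gt0 u_gt0 w_gt0 xw_lt /andP[lt_st le_td].
have -> : t = (s + (t - s))%N by lia.
have -> : (d - s = d - (s + (t - s)) + (t - s))%N by lia.
set e := (t - s)%N; set f := (d - (s + e))%N.
have e_gt0 : (0 < e)%N by rewrite /e; lia.
have K_gt0 : 0 < x ^+ s * z ^+ f * (u ^+ s * w ^+ f) by rewrite !mulr_gt0 ?exprn_gt0.
have -> : x ^+ (s + e) * z ^+ f * (u ^+ s * w ^+ (f + e)) =
          x ^+ s * z ^+ f * (u ^+ s * w ^+ f) * (x * w) ^+ e by rewrite !exprD exprMn; ring.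
have -> : x ^+ s * z ^+ (f + e) * (u ^+ (s + e) * w ^+ f) =
          x ^+ s * z ^+ f * (u ^+ s * w ^+ f) * (z * u) ^+ e by rewrite !exprD exprMn; ring.
by rewrite ltr_pM2l // ltrXn2r ?mulr_ge0 ?ltW // -lt0n.
Qed.

Theorem mainTheorem3 (R : realFieldType) (V : finType)
    (nbr : V -> {set V}) (y : V -> bool)
    (prior c : bool -> R) (k : bool) (n m : V) (d : nat) :
    (forall b, 0 <= prior b) -> prior false + prior true = 1 ->
    (forall b, 0 < c b < 1) ->
    prior false = prior true ->
    c k < 1 - c (~~ k) ->
    0 < c k < 1 / 2 ->
    #|nbr n| = d -> #|nbr m| = d ->
    (#|nbr_k nbr y m k| < #|nbr_k nbr y n k|)%N ->
    posterior prior c nbr y n k < posterior prior c nbr y m k.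
Proof.
move=> _ prior_sum c_gt0_lt1 prior_eq heterophily _ deg_n deg_m more_k.
have prior_gt0 b : 0 < prior b by case: b; lra.
have [ck_gt0 ck_lt1] := andP (c_gt0_lt1 k).
have [cNk_gt0 cNk_lt1] := andP (c_gt0_lt1 (~~ k)).
rewrite !posteriorE; apply: ltr_share; rewrite ?joint_gt0 //.
rewrite /joint !(prod_nbr_label _ _ _ _ _ _ k) !card_nbr_kN deg_n deg_m /nbr_lik !eqxx.
have [-> ->] : (k == ~~ k) = false /\ (~~ k == k) = false by case: (k).
have le_nd : (#|nbr_k nbr y n k| <= d)%N.
  by rewrite -deg_n nbr_kE subset_leq_card ?subsetIl.
rewrite !(mulrACA (prior k) _ (prior (~~ k))) ltr_pM2l ?mulr_gt0 //.
apply: ltr_binomial_cross; rewrite ?subr_gt0 ?more_k ?le_nd //; nra.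
Qed.
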